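(* If there exists a T2R semigroup, then there exists a T2R semigroup $S=S_0\cup S_1$ which contains an element $b\in S_0$ with $|J_b|=2$ and $I(b)=\{0\}$.
   Context: A semigroup $S$ is a $\Delta$-semigroup if the lattice of all congruences of $S$ is a chain with respect to inclusion. A semigroup $N$ with zero $0$ is nil if every element has some power equal to $0$; non-trivial means having more than one element. A T2R semigroup is a $\Delta$-semigroup $S$ which is the disjoint union of a non-trivial nil ideal $S_0$ (with zero $0$, which is then the zero of $S$) and a subsemigroup $S_1$ which is a two-element right zero semigroup (i.e. $S_1=\{u,v\}$ with $xy=y$ for $x,y\in S_1$). $S^1$ denotes $S$ with an identity $1$ adjoined. For $a\in S$: $J(a)=S^1aS^1$, $J_a=\{s\in S:J(s)=J(a)\}$, $I(a)=J(a)\setminus J_a$. *)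

From Stdlib Require Import Arith.

Section Semigroups.
Variable T : Type.
Variable mul : T -> T -> T.

Definition associative_op : Prop :=
  forall x y z, mul x (mul y z) = mul (mul x y) z.

Definition congruence (R : T -> T -> Prop) : Prop :=
  (forall x, R x x) /\ (forall x y, R x y -> R y x) /\
  (forall x y z, R x y -> R y z -> R x z) /\
  (forall a b c, R a b -> R (mul c a) (mul c b) /\ R (mul a c) (mul b c)).

Definition delta_semigroup : Prop :=
  associative_op /\
  forall R1 R2, congruence R1 -> congruence R2 ->
    (forall x y, R1 x y -> R2 x y) \/ (forall x y, R2 x y -> R1 x y).

(* pow x n = x^(n+1) *)
Fixpoint pow (x : T) (n : nat) : T :=
  match n with O => x | S k => mul (pow x k) x end.

Definition T2R (S0 : T -> Prop) (z u v : T) : Prop :=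
  delta_semigroup /\
  u <> v /\
  (forall x, S0 x <-> (x <> u /\ x <> v)) /\
  (forall x s, S0 x -> S0 (mul x s) /\ S0 (mul s x)) /\
  S0 z /\ (forall x, S0 x -> mul z x = z /\ mul x z = z) /\
  (forall x, S0 x -> exists n, pow x n = z) /\
  (exists x, S0 x /\ x <> z) /\
  mul u u = u /\ mul u v = v /\ mul v u = u /\ mul v v = v.

(* Multiplication by an element of S^1 = S + {1} (None = adjoined identity). *)
Definition lmul1 (s : option T) (a : T) : T :=
  match s with None => a | Some s => mul s a end.
Definition rmul1 (a : T) (t : option T) : T :=
  match t with None => a | Some t => mul a t end.

Definition Jideal (a x : T) : Prop :=
  exists s t : option T, x = rmul1 (lmul1 s a) t.

Definition Jclass (a x : T) : Prop :=
  forall y, Jideal x y <-> Jideal a y.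

Definition Iideal (a x : T) : Prop := Jideal a x /\ ~ Jclass a x.

End Semigroups.

Arguments associative_op {T}.
Arguments congruence {T}.
Arguments delta_semigroup {T}.
Arguments pow {T}.
Arguments T2R {T}.
Arguments Jideal {T}.
Arguments Jclass {T}.
Arguments Iideal {T}.

From Stdlib Require Import Classical ClassicalEpsilon ProofIrrelevance.

(* Let S = S0 ∪ {u, v} be a T2R semigroup with zero z.  The proof has three steps.
   1. Separation: some x0 ∈ S0 has x0 u ≠ x0 v.  Otherwise several congruences
      identifying u with v would each contain the Rees congruence of S0 (the
      congruences of a Δ-semigroup form a chain); successively this forces
      S0 S0 = 0, then u x = v x on S0, and finally S0 = {z}, contradicting
      non-triviality.
   2. The J-class of b := x0 u: since S0 is nil, b = p b q with b ≠ z forces p, q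
      outside S0, and from this J_b = {b, c} with c := x0 v.  Hence
      I := J(b) \ {b, c} is an ideal with z ∈ I ⊆ S0.
   3. The Rees quotient S/I: homomorphic images of Δ-semigroups are Δ-semigroups,
      so S/I is again T2R, and in S/I we have J(b) = {0, b, c}, whence |J_b| = 2
      and I(b) = {0}. *)

Section JIdeals.
Variables (X : Type) (m : X -> X -> X).
Hypothesis m_assoc : associative_op m.

Local Notation L1 := (lmul1 X m).
Local Notation R1 := (rmul1 X m).

Definition mul1 (s t : option X) : option X :=
  match s, t with
  | None, t => t
  | s, None => s
  | Some a, Some b => Some (m a b)
  end.

Lemma lmul1_lmul1 s s' x : L1 s' (L1 s x) = L1 (mul1 s' s) x.
Proof. destruct s, s'; simpl; try apply m_assoc; reflexivity. Qed.

Lemma rmul1_rmul1 x t t' : R1 (R1 x t) t' = R1 x (mul1 t t').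
Proof. destruct t, t'; simpl; try (symmetry; apply m_assoc); reflexivity. Qed.

Lemma lmul1_rmul1 s x t : L1 s (R1 x t) = R1 (L1 s x) t.
Proof. destruct s, t; simpl; try apply m_assoc; reflexivity. Qed.

Lemma Jideal_refl a : Jideal m a a.
Proof. exists None, None. reflexivity. Qed.

Lemma Jideal_trans a x y : Jideal m a x -> Jideal m x y -> Jideal m a y.
Proof.
  intros [s [t ->]] [s' [t' ->]].
  exists (mul1 s' s), (mul1 t t').
  now rewrite lmul1_rmul1, rmul1_rmul1, lmul1_lmul1.
Qed.

Lemma Jideal_mul_l a x s : Jideal m a x -> Jideal m a (m s x).
Proof. intro H. apply (Jideal_trans _ _ _ H). now exists (Some s), None. Qed.

Lemma Jideal_mul_r a x s : Jideal m a x -> Jideal m a (m x s).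
Proof. intro H. apply (Jideal_trans _ _ _ H). now exists None, (Some s). Qed.

Lemma Jideal_zero o : (forall s, m o s = o /\ m s o = o) ->
  forall y, Jideal m o y -> y = o.
Proof.
  intros Ho y [s [t ->]].
  destruct s as [s|], t as [t|]; simpl; rewrite ?(proj2 (Ho s)), ?(proj1 (Ho t)); reflexivity.
Qed.

Section ThreeElementIdeal.
Variables (o a c : X).
Hypothesis o_zero : forall s, m o s = o /\ m s o = o.
Hypothesis a_nonzero : a <> o.
Hypothesis c_nonzero : c <> o.
Hypothesis Ja_spec : forall y, Jideal m a y <-> y = o \/ y = a \/ y = c.
Hypothesis Jca : Jideal m c a.

Lemma Jclass_of_three x : Jclass m a x <-> x = a \/ x = c.
Proof.
  split.
  - intro Hx.
    assert (Jax : Jideal m a x) by (apply Hx, Jideal_refl).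
    apply Ja_spec in Jax as [-> | Jax]; [|exact Jax].
    exfalso. apply a_nonzero, (Jideal_zero o o_zero), Hx, Jideal_refl.
  - assert (Jac : Jideal m a c) by (apply Ja_spec; auto).
    intros [-> | ->] y; [tauto|].
    split; intro J; eapply Jideal_trans; eassumption.
Qed.

Lemma Iideal_of_three x : Iideal m a x <-> x = o.
Proof.
  unfold Iideal. rewrite Jclass_of_three, Ja_spec.
  split; [tauto|]. intros ->. split; auto.
  intros [E | E]; [apply a_nonzero | apply c_nonzero]; auto.
Qed.
End ThreeElementIdeal.

End JIdeals.

(* The Δ property passes to homomorphic images: congruences of the image pull
   back to congruences of the source. *)
Section DeltaImage.
Variables (X Y : Type) (mX : X -> X -> X) (mY : Y -> Y -> Y) (f : X -> Y).
Hypothesis f_hom : forall x y, f (mX x y) = mY (f x) (f y).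
Hypothesis f_surj : forall y, exists x, f x = y.

Lemma pullback_congruence R :
  congruence mY R -> congruence mX (fun x y => R (f x) (f y)).
Proof.
  intros [Hr [Hs [Ht Hc]]]. split; [|split; [|split]]; intros; eauto.
  rewrite !f_hom. apply Hc; assumption.
Qed.

Lemma delta_image : delta_semigroup mX -> delta_semigroup mY.
Proof.
  intros [assoc chain]. split.
  - intros a b c.
    destruct (f_surj a) as [x <-], (f_surj b) as [y <-], (f_surj c) as [w <-].
    now rewrite <- !f_hom, assoc.
  - intros R1 R2 C1 C2.
    destruct (chain _ _ (pullback_congruence _ C1) (pullback_congruence _ C2)) as [H|H];
      [left|right]; intros a b;
      destruct (f_surj a) as [x <-], (f_surj b) as [y <-]; apply H.
Qed.
End DeltaImage.
(* The Rees quotient S/I of a semigroup by a nonempty ideal I: the elements of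
   S outside I together with a new zero None, which collapses I. *)
Section ReesQuotient.
Variables (X : Type) (m : X -> X -> X) (I : X -> Prop) (i0 : X).
Hypothesis I_ideal : forall s y, I y -> I (m s y) /\ I (m y s).
Hypothesis I_i0 : I i0.

Definition rees : Type := option {x : X | ~ I x}.

Definition rees_proj (x : X) : rees :=
  match excluded_middle_informative (I x) with
  | left _ => None
  | right h => Some (exist _ x h)
  end.

Definition rees_mul (a c : rees) : rees :=
  match a, c with
  | Some x, Some y => rees_proj (m (proj1_sig x) (proj1_sig y))
  | _, _ => None
  end.

Definition rees_rep (a : rees) : X :=
  match a with None => i0 | Some x => proj1_sig x end.

Local Notation q := rees_proj.

Lemma rees_proj_in x : I x -> q x = None.
Proof.
  intro h. unfold q.
  destruct (excluded_middle_informative (I x)); [reflexivity | contradiction].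
Qed.

Lemma rees_proj_out x (h : ~ I x) : q x = Some (exist _ x h).
Proof.
  unfold q. destruct (excluded_middle_informative (I x)); [contradiction|].
  do 2 f_equal. apply proof_irrelevance.
Qed.

Lemma rees_proj_rep a : q (rees_rep a) = a.
Proof. destruct a as [[x h]|]; simpl; [apply rees_proj_out | apply rees_proj_in, I_i0]. Qed.

Lemma rees_proj_surj a : exists x, q x = a.
Proof. exists (rees_rep a). apply rees_proj_rep. Qed.

Lemma rees_proj_inj x y : ~ I y -> q x = q y -> x = y.
Proof.
  intros hy E. rewrite (rees_proj_out y hy) in E. unfold q in E.
  destruct (excluded_middle_informative (I x)); [discriminate|].
  now injection E.
Qed.

Lemma rees_proj_hom x y : q (m x y) = rees_mul (q x) (q y).
Proof.
  destruct (classic (I x)) as [hx|hx].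
  - rewrite (rees_proj_in x hx), rees_proj_in; [reflexivity | apply (I_ideal y x hx)].
  - destruct (classic (I y)) as [hy|hy].
    + rewrite (rees_proj_in y hy), rees_proj_in by apply (I_ideal x y hy).
      now destruct (q x).
    + now rewrite (rees_proj_out x hx), (rees_proj_out y hy).
Qed.

Lemma rees_zero a : rees_mul None a = None /\ rees_mul a None = None.
Proof. now destruct a. Qed.

Lemma rees_pow x n : pow rees_mul (q x) n = q (pow m x n).
Proof. induction n; simpl; [|rewrite IHn, rees_proj_hom]; reflexivity. Qed.

Lemma rees_delta : delta_semigroup m -> delta_semigroup rees_mul.
Proof. apply (delta_image _ _ _ _ q rees_proj_hom rees_proj_surj). Qed.

Lemma rees_Jideal a y : Jideal m a y -> Jideal rees_mul (q a) (q y).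
Proof.
  intros [s [t ->]]. exists (option_map q s), (option_map q t).
  destruct s, t; simpl; rewrite ?rees_proj_hom; reflexivity.
Qed.

Lemma rees_Jideal_inv a w : Jideal rees_mul (q a) w -> exists y, Jideal m a y /\ w = q y.
Proof.
  intros [s [t ->]].
  exists (rmul1 _ m (lmul1 _ m (option_map rees_rep s) a) (option_map rees_rep t)).
  split; [eexists; eexists; reflexivity|].
  destruct s, t; simpl; rewrite ?rees_proj_hom, ?rees_proj_rep; reflexivity.
Qed.
End ReesQuotient.
Section T2RStructure.
Variables (T : Type) (mul : T -> T -> T) (S0 : T -> Prop) (z u v : T).
Hypothesis mul_delta : delta_semigroup mul.
Hypothesis u_neq_v : u <> v.
Hypothesis S0_spec : forall x, S0 x <-> (x <> u /\ x <> v).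
Hypothesis S0_ideal : forall x s, S0 x -> S0 (mul x s) /\ S0 (mul s x).
Hypothesis S0_z : S0 z.
Hypothesis z_zero_S0 : forall x, S0 x -> mul z x = z /\ mul x z = z.
Hypothesis S0_nil : forall x, S0 x -> exists n, pow mul x n = z.
Hypothesis S0_nontrivial : exists x, S0 x /\ x <> z.
Hypothesis uu : mul u u = u.
Hypothesis uv : mul u v = v.
Hypothesis vu : mul v u = u.
Hypothesis vv : mul v v = v.

Let mul_assoc : associative_op mul := proj1 mul_delta.

Local Notation L1 := (lmul1 T mul).
Local Notation R1 := (rmul1 T mul).

Definition UV (x : T) : Prop := x = u \/ x = v.

Lemma S0_not_UV x : S0 x -> ~ UV x.
Proof. intros Hx [-> | ->]; apply S0_spec in Hx; tauto. Qed.

Lemma UV_of_not_S0 x : ~ S0 x -> UV x.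
Proof.
  intro H. unfold UV. destruct (classic (x = u)); auto.
  destruct (classic (x = v)); auto. exfalso. apply H, S0_spec. auto.
Qed.

Lemma UV_right_zero a w : UV a -> UV w -> mul a w = w.
Proof. intros [-> | ->] [-> | ->]; assumption. Qed.

Lemma S0_mul_r x s : S0 x -> S0 (mul x s). Proof. apply S0_ideal. Qed.
Lemma S0_mul_l x s : S0 x -> S0 (mul s x). Proof. apply S0_ideal. Qed.

Lemma z_zero s : mul z s = z /\ mul s z = z.
Proof.
  destruct (z_zero_S0 z S0_z) as [zz _]. split.
  - rewrite <- zz at 1. rewrite <- mul_assoc. apply z_zero_S0, S0_mul_r, S0_z.
  - rewrite <- zz at 1. rewrite mul_assoc. apply z_zero_S0, S0_mul_l, S0_z.
Qed.

Definition rees_S0 (x y : T) : Prop := x = y \/ (S0 x /\ S0 y).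

Lemma rees_S0_congruence : congruence mul rees_S0.
Proof.
  unfold rees_S0. split; [|split; [|split]].
  - auto.
  - intros x y [H|H]; [left | right]; intuition.
  - intros x y w [H|H] [H'|H']; subst; auto. right; tauto.
  - intros a b c [-> | [Ha Hb]]; [split; left; reflexivity|].
    split; right; split; auto using S0_mul_l, S0_mul_r.
Qed.

(* Since the congruences form a chain, any congruence identifying u with v
   collapses all of S0. *)
Lemma congruence_uv_collapses_S0 R : congruence mul R -> R u v ->
  forall x y, S0 x -> S0 y -> R x y.
Proof.
  intros CR Ruv.
  destruct (proj2 mul_delta _ _ CR rees_S0_congruence) as [H|H].
  - exfalso. destruct (H u v Ruv) as [E | [Su _]]; [exact (u_neq_v E)|].
    apply (S0_not_UV u Su). left. reflexivity.
  - intros x y Hx Hy. apply H. right. auto.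
Qed.

Section NoSeparatingElement.
(* Towards a contradiction: no element of S0 separates u and v on the right. *)
Hypothesis no_separation : forall x, S0 x -> mul x u = mul x v.

(* Then S0 S0 = 0: the congruence x ~ y iff s x = s y for all s ∈ S0 identifies
   u and v. *)
Lemma S0_square_zero s x : S0 s -> S0 x -> mul s x = z.
Proof.
  set (tau := fun x y => forall s, S0 s -> mul s x = mul s y).
  assert (Ctau : congruence mul tau).
  { unfold tau. split; [|split; [|split]].
    - reflexivity.
    - intros; symmetry; auto.
    - intros x' y w H1 H2 s' Hs. rewrite H1, H2; auto.
    - intros a b c H. split; intros s' Hs; rewrite !mul_assoc.
      + apply H, S0_mul_r, Hs.
      + rewrite H; auto. }
  intros Hs Hx. rewrite <- (proj2 (z_zero s)).
  apply (congruence_uv_collapses_S0 tau Ctau no_separation); assumption.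
Qed.

(* The congruence identifying u with v and collapsing a two-sided ideal K ⊆ S0;
   the last hypothesis makes it compatible with right multiplication. *)
Definition collapse (K : T -> Prop) (x y : T) : Prop :=
  x = y \/ (UV x /\ UV y) \/ (K x /\ K y).

Lemma collapse_congruence (K : T -> Prop) :
  (forall x, K x -> S0 x) ->
  (forall s x, K x -> K (mul s x) /\ K (mul x s)) ->
  (forall c, S0 c -> mul u c = mul v c \/ (K (mul u c) /\ K (mul v c))) ->
  congruence mul (collapse K).
Proof.
  intros KS0 Kideal Kright. unfold collapse.
  assert (disj : forall x, K x -> UV x -> False)
    by (intros x Kx; apply S0_not_UV, KS0, Kx).
  split; [|split; [|split]].
  - auto.
  - intros x y [H|[H|H]]; [left | right; left | right; right]; intuition.
  - intros x y w [H|[H|H]] [H'|[H'|H']]; subst; auto;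
      try (right; left; tauto); try (right; right; tauto);
      exfalso; apply (disj y); tauto.
  - intros a b c [-> | [[Ha Hb] | [Ka Kb]]]; [split; left; reflexivity| |].
    + destruct (classic (S0 c)) as [Sc | Sc].
      * split.
        -- left. destruct Ha as [-> | ->], Hb as [-> | ->];
             rewrite ?(no_separation c Sc); reflexivity.
        -- destruct (Kright c Sc) as [E | Ks];
             destruct Ha as [-> | ->], Hb as [-> | ->]; rewrite ?E;
             first [left; reflexivity | right; right; tauto].
      * apply UV_of_not_S0 in Sc. split.
        -- right; left. rewrite !UV_right_zero by assumption. auto.
        -- left. rewrite !(UV_right_zero _ c) by assumption. reflexivity.
    + destruct (Kideal c a Ka), (Kideal c b Kb).
      split; right; right; split; assumption.
Qed.

Lemma collapse_S0 K : congruence mul (collapse K) -> forall x, S0 x -> x = z \/ K x.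
Proof.
  intros CK x Hx.
  assert (Cuv : collapse K u v) by (right; left; split; [left | right]; reflexivity).
  destruct (congruence_uv_collapses_S0 _ CK Cuv x z Hx S0_z) as [E | [[Ux _] | [Kx _]]];
    auto.
  exfalso. exact (S0_not_UV x Hx Ux).
Qed.

(* First collapse: K = {x ∈ S0 | u x = v x}; it shows u x = v x on all of S0. *)
Lemma S0_left_equalized x : S0 x -> mul u x = mul v x.
Proof.
  set (K := fun x => S0 x /\ mul u x = mul v x).
  assert (CK : congruence mul (collapse K)).
  { apply collapse_congruence.
    - intros y [Hy _]. exact Hy.
    - intros s y [Hy Ey]. split; split; auto using S0_mul_l, S0_mul_r.
      + rewrite !mul_assoc. destruct (classic (S0 s)) as [Ss | Ss].
        * rewrite !(S0_square_zero _ y) by auto using S0_mul_l; reflexivity.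
        * rewrite !(UV_right_zero _ s) by (auto using UV_of_not_S0; now constructor).
          reflexivity.
      + now rewrite !mul_assoc, Ey.
    - intros c Hc. right.
      split; split; auto using S0_mul_l; rewrite !mul_assoc; congruence. }
  intro Hx. destruct (collapse_S0 K CK x Hx) as [-> | [_ E]]; [|exact E].
  now rewrite (proj2 (z_zero u)), (proj2 (z_zero v)).
Qed.

(* Second collapse: K = {z}; it shows S0 = {z}. *)
Lemma S0_trivial x : S0 x -> x = z.
Proof.
  assert (CK : congruence mul (collapse (fun y => y = z))).
  { apply collapse_congruence.
    - intros y ->. exact S0_z.
    - intros s y ->. now destruct (z_zero s).
    - intros c Hc. left. apply S0_left_equalized, Hc. }
  intro Hx. now destruct (collapse_S0 _ CK x Hx).
Qed.
End NoSeparatingElement.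

Lemma separating_element : exists x0, S0 x0 /\ mul x0 u <> mul x0 v.
Proof.
  apply NNPP. intro Hn.
  assert (Hsep : forall x, S0 x -> mul x u = mul x v).
  { intros x Hx. apply NNPP. intro E. apply Hn. exists x. auto. }
  destruct S0_nontrivial as [x [Hx Nx]].
  exact (Nx (S0_trivial Hsep x Hx)).
Qed.

Definition outside_S0 (s : option T) : Prop :=
  match s with None => True | Some w => ~ S0 w end.

Lemma outside_S0_mul1 s t : outside_S0 (mul1 T mul s t) -> outside_S0 s /\ outside_S0 t.
Proof.
  intro Hout. destruct s as [s|], t as [t|]; simpl in *; split; auto;
    intro St; apply Hout; auto using S0_mul_l, S0_mul_r.
Qed.

Lemma mul1_Some_r s w : mul1 T mul s (Some w) = Some (L1 s w).
Proof. now destruct s. Qed.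

Lemma left_iterate p y t : y = mul p (R1 y t) ->
  forall n, exists t', y = mul (pow mul p n) (R1 y t').
Proof.
  intros E n. induction n as [|n [t' IH]]; [now exists t|].
  exists (mul1 T mul t t'). simpl. rewrite IH at 1. rewrite E at 1.
  rewrite <- mul_assoc, <- (rmul1_rmul1 T mul mul_assoc). f_equal.
  symmetry. exact (lmul1_rmul1 T mul mul_assoc (Some p) (R1 y t) t').
Qed.

Lemma right_iterate s y q : y = mul (L1 s y) q ->
  forall n, exists s', y = mul (L1 s' y) (pow mul q n).
Proof.
  intros E n. induction n as [|n [s' IH]]; [now exists s|].
  exists (mul1 T mul s s'). simpl. rewrite E at 1. rewrite IH at 1.
  rewrite <- (lmul1_lmul1 T mul mul_assoc), mul_assoc. f_equal.
  exact (lmul1_rmul1 T mul mul_assoc s (L1 s' y) (Some (pow mul q n))).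
Qed.

(* As S0 is nil, a nonzero y ∈ S0 with y = p y q has both p and q outside S0. *)
Lemma nil_outer_factors y p q : S0 y -> y <> z -> y = R1 (L1 p y) q ->
  outside_S0 p /\ outside_S0 q.
Proof.
  intros Sy Nz E. split.
  - destruct p as [p|]; [intro Sp | exact I].
    destruct (S0_nil p Sp) as [n Hn].
    assert (E' : y = mul p (R1 y q)).
    { rewrite E at 1. symmetry. exact (lmul1_rmul1 T mul mul_assoc (Some p) y q). }
    destruct (left_iterate p y q E' n) as [t Ht].
    apply Nz. rewrite Ht, Hn. apply z_zero.
  - destruct q as [q|]; [intro Sq | exact I].
    destruct (S0_nil q Sq) as [n Hn].
    destruct (right_iterate p y q E n) as [s Hs].
    apply Nz. rewrite Hs, Hn. apply z_zero.
Qed.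

Lemma UV_fixes_UV_multiples w w' r : UV w -> UV w' -> mul w (mul w' r) = mul w' r.
Proof. intros Hw Hw'. now rewrite mul_assoc, (UV_right_zero w w'). Qed.

Lemma Jideal_S0 a y : S0 a -> Jideal mul a y -> S0 y.
Proof. intros Sa [[s|] [[t|] ->]]; simpl; auto using S0_mul_l, S0_mul_r. Qed.

Section ReesOfT2R.
Variable I : T -> Prop.
Hypothesis I_ideal : forall s y, I y -> I (mul s y) /\ I (mul y s).
Hypothesis I_z : I z.
Hypothesis I_S0 : forall y, I y -> S0 y.
Variable b0 : T.
Hypothesis b0_S0 : S0 b0.
Hypothesis b0_not_I : ~ I b0.

Local Notation q := (rees_proj T I).

Definition S0_quot (a : rees T I) : Prop := a <> q u /\ a <> q v.

Lemma UV_not_I w : UV w -> ~ I w.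
Proof. intros Hw Iw. exact (S0_not_UV w (I_S0 w Iw) Hw). Qed.

Lemma rees_proj_eq_UV x w : UV w -> q x = q w <-> x = w.
Proof. intro Hw. split; [apply rees_proj_inj, UV_not_I, Hw | now intros ->]. Qed.

Lemma S0_quot_proj x : S0_quot (q x) <-> S0 x.
Proof.
  unfold S0_quot. rewrite S0_spec, !rees_proj_eq_UV by (unfold UV; auto).
  reflexivity.
Qed.

Lemma rees_T2R : T2R (rees_mul T mul I) S0_quot None (q u) (q v).
Proof.
  assert (q_ind : forall P : rees T I -> Prop, (forall x, P (q x)) -> forall a, P a)
    by (intros P H a; destruct (rees_proj_surj T I z I_z a) as [x <-]; apply H).
  pose proof (rees_proj_hom T mul I I_ideal) as hom.
  split; [exact (rees_delta T mul I z I_ideal I_z mul_delta)|].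
  split; [rewrite rees_proj_eq_UV by (right; reflexivity); exact u_neq_v|].
  split; [reflexivity|].
  split.
  { intro a. pattern a. apply q_ind. intros x s. pattern s. apply q_ind. intro y.
    rewrite <- !hom, !S0_quot_proj. apply S0_ideal. }
  split; [rewrite <- (rees_proj_in T I z I_z); apply S0_quot_proj, S0_z|].
  split; [intros a _; apply rees_zero|].
  split.
  { intro a. pattern a. apply q_ind. intros x Hx. apply S0_quot_proj in Hx.
    destruct (S0_nil x Hx) as [n Hn]. exists n.
    rewrite (rees_pow T mul I I_ideal), Hn. apply rees_proj_in, I_z. }
  split.
  { exists (q b0). split; [apply S0_quot_proj, b0_S0|].
    rewrite (rees_proj_out T I b0 b0_not_I). discriminate. }
  rewrite <- !hom, uu, uv, vu, vv. auto.
Qed.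
End ReesOfT2R.

Section SeparatedClass.
Variable x0 : T.
Hypothesis x0_S0 : S0 x0.
Hypothesis x0_separates : mul x0 u <> mul x0 v.

Let b := mul x0 u.
Let c := mul x0 v.

Lemma b_u : mul b u = b. Proof. unfold b. now rewrite <- mul_assoc, uu. Qed.
Lemma b_v : mul b v = c. Proof. unfold b, c. now rewrite <- mul_assoc, uv. Qed.
Lemma c_u : mul c u = b. Proof. unfold b, c. now rewrite <- mul_assoc, vu. Qed.
Lemma b_S0 : S0 b. Proof. apply S0_mul_r, x0_S0. Qed.

Lemma b_nonzero : b <> z.
Proof. intro E. apply x0_separates. fold b c. now rewrite <- b_v, E, (proj1 (z_zero v)). Qed.

Lemma c_nonzero : c <> z.
Proof. intro E. apply x0_separates. fold b c. now rewrite <- c_u, E, (proj1 (z_zero u)). Qed.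

Lemma Jideal_b_c : Jideal mul b c. Proof. exists None, (Some v). symmetry. apply b_v. Qed.
Lemma Jideal_c_b : Jideal mul c b. Proof. exists None, (Some u). symmetry. apply c_u. Qed.

Lemma Jclass_b y : Jideal mul b y -> Jideal mul y b -> y = b \/ y = c.
Proof.
  intros [s [t ->]] [s' [t' Eb]].
  rewrite (lmul1_rmul1 T mul mul_assoc), (rmul1_rmul1 T mul mul_assoc),
    (lmul1_lmul1 T mul mul_assoc) in Eb.
  destruct (nil_outer_factors b _ _ b_S0 b_nonzero Eb) as [Os Ott'].
  destruct (outside_S0_mul1 _ _ Ott') as [Ot _].
  assert (Hs : L1 s b = b).
  { destruct s as [w|]; [|reflexivity].
    rewrite mul1_Some_r in Eb, Os.
    destruct (outside_S0_mul1 s' (Some w)) as [_ Ow]; [rewrite mul1_Some_r; exact Os|].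
    (* b = w' (b r) with w' := s' w outside S0, hence in {u, v} *)
    assert (Eb' : b = mul (L1 s' w) (R1 b (mul1 T mul t t'))).
    { rewrite Eb at 1. exact (eq_sym (lmul1_rmul1 T mul mul_assoc (Some _) b _)). }
    simpl. rewrite Eb'. apply UV_fixes_UV_multiples; apply UV_of_not_S0; assumption. }
  rewrite Hs. destruct t as [t|]; [|left; reflexivity]. simpl.
  destruct (UV_of_not_S0 t Ot) as [-> | ->]; [left; apply b_u | right; apply b_v].
Qed.

Definition below_b (y : T) : Prop := Jideal mul b y /\ y <> b /\ y <> c.

Lemma Jideal_to_b y : y = b \/ y = c -> Jideal mul y b.
Proof. intros [-> | ->]; [apply Jideal_refl | apply Jideal_c_b]. Qed.

Lemma below_b_down y y' : below_b y -> Jideal mul y y' -> below_b y'.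
Proof.
  intros [Jby Ny] Jyy'. split; [exact (Jideal_trans T mul mul_assoc _ _ _ Jby Jyy')|].
  enough (~ (y' = b \/ y' = c)) by tauto.
  intro Hy'. enough (y = b \/ y = c) by tauto.
  apply Jclass_b; [exact Jby|].
  exact (Jideal_trans T mul mul_assoc _ _ _ Jyy' (Jideal_to_b y' Hy')).
Qed.

Lemma below_b_ideal s y : below_b y -> below_b (mul s y) /\ below_b (mul y s).
Proof.
  intro Hy. split; apply (below_b_down y _ Hy);
    [apply (Jideal_mul_l T mul mul_assoc) | apply (Jideal_mul_r T mul mul_assoc)];
    apply Jideal_refl.
Qed.

Lemma below_b_S0 y : below_b y -> S0 y.
Proof. intros [Jby _]. exact (Jideal_S0 b y b_S0 Jby). Qed.

Lemma Jideal_b_z : Jideal mul b z.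
Proof. exists (Some z), None. symmetry. apply z_zero. Qed.

Lemma below_b_z : below_b z.
Proof.
  split; [exact Jideal_b_z|].
  split; intro E; [apply b_nonzero | apply c_nonzero]; auto.
Qed.

Lemma b_not_below : ~ below_b b. Proof. intros [_ [N _]]. auto. Qed.
Lemma c_not_below : ~ below_b c. Proof. intros [_ [_ N]]. auto. Qed.

Local Notation q := (rees_proj T below_b).
Local Notation mulQ := (rees_mul T mul below_b).

Lemma reduct_Jideal_b w : Jideal mulQ (q b) w <-> w = None \/ w = q b \/ w = q c.
Proof.
  split.
  - intro J. destruct (rees_Jideal_inv T mul below_b z below_b_ideal below_b_z _ _ J)
      as [y [Jby ->]].
    destruct (classic (below_b y)) as [By | By].
    + left. apply rees_proj_in, By.
    + right. destruct (classic (y = b)) as [-> | Nb]; [auto|].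
      destruct (classic (y = c)) as [-> | Nc]; [auto|].
      exfalso. apply By. repeat split; assumption.
  - intros [-> | [-> | ->]].
    + rewrite <- (rees_proj_in T below_b z below_b_z).
      apply rees_Jideal, Jideal_b_z. exact below_b_ideal.
    + apply Jideal_refl.
    + apply rees_Jideal, Jideal_b_c. exact below_b_ideal.
Qed.

Lemma reduct_b_nonzero : q b <> None.
Proof. rewrite (rees_proj_out T below_b b b_not_below). discriminate. Qed.

Lemma reduct_c_nonzero : q c <> None.
Proof. rewrite (rees_proj_out T below_b c c_not_below). discriminate. Qed.

Lemma reduct_c_neq_b : q c <> q b.
Proof.
  intro E. apply x0_separates. symmetry.
  exact (rees_proj_inj T below_b c b b_not_below E).
Qed.

Lemma reduct_properties :
  T2R mulQ (S0_quot below_b) None (q u) (q v) /\ S0_quot below_b (q b) /\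
  (forall x, Jclass mulQ (q b) x <-> x = q b \/ x = q c) /\
  (forall x, Iideal mulQ (q b) x <-> x = None).
Proof.
  pose proof (rees_T2R below_b below_b_ideal below_b_z below_b_S0 b b_S0 b_not_below)
    as HT.
  assert (assocQ : associative_op mulQ) by apply HT.
  assert (zero : forall s, mulQ None s = None /\ mulQ s None = None) by apply rees_zero.
  assert (Jcb : Jideal mulQ (q c) (q b))
    by (apply rees_Jideal, Jideal_c_b; exact below_b_ideal).
  split; [exact HT|].
  split; [apply S0_quot_proj; [exact below_b_S0 | exact b_S0]|].
  split; intro x.
  - exact (Jclass_of_three _ mulQ assocQ None (q b) (q c) zero reduct_b_nonzero
             reduct_Jideal_b Jcb x).
  - exact (Iideal_of_three _ mulQ assocQ None (q b) (q c) zero reduct_b_nonzero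
             reduct_c_nonzero reduct_Jideal_b Jcb x).
Qed.
End SeparatedClass.

Lemma T2R_reduct_exists :
  exists (T' : Type) (mul' : T' -> T' -> T') (S0' : T' -> Prop) (z' u' v' b' : T'),
    T2R mul' S0' z' u' v' /\ S0' b' /\
    (exists c', c' <> b' /\ forall x, Jclass mul' b' x <-> (x = b' \/ x = c')) /\
    (forall x, Iideal mul' b' x <-> x = z').
Proof.
  destruct separating_element as [x0 [Hx0 Hsep]].
  destruct (reduct_properties x0 Hx0 Hsep) as [HT [Hb [Hclass Hideal]]].
  eexists _, _, _, _, _, _, _. split; [exact HT|]. split; [exact Hb|].
  split; [|exact Hideal].
  exists (rees_proj T (below_b x0) (mul x0 v)).
  split; [exact (reduct_c_neq_b x0 Hsep) | exact Hclass].
Qed.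
End T2RStructure.

Theorem proposition5 :
  (exists (T : Type) (mul : T -> T -> T) (S0 : T -> Prop) (z u v : T),
      T2R mul S0 z u v) ->
  exists (T : Type) (mul : T -> T -> T) (S0 : T -> Prop) (z u v b : T),
    T2R mul S0 z u v /\ S0 b /\
    (* |J_b| = 2 *)
    (exists c, c <> b /\ forall x, Jclass mul b x <-> (x = b \/ x = c)) /\
    (* I(b) = {0} *)
    (forall x, Iideal mul b x <-> x = z).
Proof.
  intros [T [mul [S0 [z [u [v HT]]]]]].
  destruct HT as [Hdelta [Huv [HS0 [Hideal [Hz [Hzero [Hnil [Hnt [Huu [Hu_v [Hvu Hvv]]]]]]]]]]].
  exact (T2R_reduct_exists T mul S0 z u v Hdelta Huv HS0 Hideal Hz Hzero Hnil Hnt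
           Huu Hu_v Hvu Hvv).
Qed.
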